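(* Let $n\ge2$ and consider the test $\mathcal{T}_2$ described below. For every $i\in[n]$, the polynomial $f(x)=x_i$ passes $\mathcal{T}_2$ with probability at least $1-\beta$, where $\beta=1/\log n$.
   Context: The test $\mathcal{T}_2$ takes as input a degree-2 real polynomial $f:\mathbb{R}^n\to\mathbb{R}$. Fix $\beta:=1/\log n$ and $\delta:=2^{-n}$. Generate independent bits $a_1,\dots,a_n\in\{0,1\}$ each with expected value $\beta$ and independent standard Gaussians $g_1,\dots,g_n$; set $r=(a_1g_1,\dots,a_ng_n)$. Pick $i$ uniformly from $\{1,2,\dots,(\log n)^2\}$ and set $t=n^i$; pick a uniform $b\in\{-1,1\}$ (all choices independent). Let $\omega=(1,\dots,1)\in\mathbb{R}^n$ and $y=t^3r+bt^2\delta\omega$. The test accepts (f passes) iff $\mathrm{sign}(f(y))=b$. *)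

From HB Require Import structures.
From mathcomp Require Import all_boot all_order all_algebra.
From mathcomp Require Import all_classical all_reals all_analysis.
Set Implicit Arguments. Unset Strict Implicit. Unset Printing Implicit Defensive.
Import Order.TTheory GRing.Theory Num.Theory.
Local Open Scope ring_scope.

Definition log2n (R : realType) (n : nat) : R := ln (n%:R : R) / ln 2.
Definition betaT2 (R : realType) (n : nat) : R := (log2n R n)^-1.
Definition deltaT2 (R : realType) (n : nat) : R := (2 : R) ^- n.
(* number of choices for the exponent i : {1, ..., ceil((log n)^2)} *)
Definition KT2 (R : realType) (n : nat) : nat := `|Num.ceil (log2n R n ^+ 2)|%N.

(* Expectation w.r.t. k independent standard Gaussians g_0, ..., g_{k-1}
   (coordinates >= k are set to 0), as an iterated Lebesgue integral
   against the standard normal probability measure. *)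
Fixpoint gauss_iter (R : realType) (k : nat) (F : (nat -> R) -> \bar R) : \bar R :=
  match k with
  | 0 => F (fun _ => 0)
  | k'.+1 => (\int[normal_prob (0:R) 1]_x
                gauss_iter k' (fun g => F (fun j => if j == k' then x else g j)))%E
  end.

Definition bsign (R : realType) (b : bool) : R := if b then 1 else -1.

(* The query point y = t^3 r + b t^2 delta omega, with r_j = a_j g_j. *)
Definition yT2 (R : realType) (n : nat) (a : {ffun 'I_n -> bool}) (g : nat -> R)
  (t : R) (b : bool) : 'I_n -> R :=
  fun j => t ^+ 3 * ((a j)%:R * g j) + bsign R b * t ^+ 2 * deltaT2 R n.

(* Probability that f passes the test T_2:
   a_j ~ Bernoulli(beta) independent, g_j ~ N(0,1) independent,
   i uniform in {1,...,KT2 n}, t = n^i, b uniform in {-1,1};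
   accept iff sign(f(y)) = b. *)
Definition T2_pass_prob (R : realType) (n : nat) (f : ('I_n -> R) -> R) : \bar R :=
  (\sum_(a : {ffun 'I_n -> bool})
     \sum_(i < KT2 R n)
       \sum_(b : bool)
         ((\prod_(j : 'I_n) (if a j then betaT2 R n else 1 - betaT2 R n))
            / (KT2 R n)%:R / 2)%:E *
         gauss_iter n (fun g =>
           ((Num.sg (f (yT2 a g ((n%:R : R) ^+ i.+1) b)) == bsign R b)%:R : R)%:E))%E.

From HB Require Import structures.
From mathcomp Require Import all_boot all_order all_algebra.
From mathcomp Require Import all_classical all_reals all_analysis.
From mathcomp Require Import ring.
Set Implicit Arguments. Unset Strict Implicit. Unset Printing Implicit Defensive.
Import Order.TTheory GRing.Theory Num.Theory.
Local Open Scope ring_scope.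

(* On the
   event a_i = 0, which has probability 1 - beta, y_i = b t^2 delta has sign b
   whatever g, t and b are, so the test accepts there with certainty. *)

Lemma gauss_iter_ge0 (R : realType) k (F : (nat -> R) -> \bar R) :
  (forall g, 0 <= F g)%E -> (0 <= gauss_iter k F)%E.
Proof.
elim: k F => [|k IH] F F_ge0 /=; first exact: F_ge0.
by apply: integral_ge0 => x _; apply: IH => g; apply: F_ge0.
Qed.

Lemma gauss_iter_cst (R : realType) k (c : \bar R) :
  gauss_iter k (fun _ => c) = c.
Proof.
elim: k => [|k IH] //=.
under eq_integral do rewrite IH.
by rewrite integral_cst //= probability_setT mule1.
Qed.

Lemma log2n_ge1 (R : realType) n : (2 <= n)%N -> 1 <= log2n R n.
Proof.
move=> n_ge2; have ln2_gt0 : 0 < ln (2 : R) by rewrite ln_gt0 // ltr1n.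
have two_le_n : (2 : R) <= n%:R by rewrite ler_nat.
rewrite /log2n ler_pdivlMr // mul1r ler_ln ?posrE //.
exact: lt_le_trans two_le_n.
Qed.

Lemma betaT2_ge0 (R : realType) n : (2 <= n)%N -> 0 <= betaT2 R n.
Proof. by move=> /(log2n_ge1 R) L_ge1; rewrite invr_ge0 (le_trans ler01). Qed.

Lemma betaT2_le1 (R : realType) n : (2 <= n)%N -> betaT2 R n <= 1.
Proof. by move=> /(log2n_ge1 R) L_ge1; rewrite invf_le1 // (lt_le_trans ltr01). Qed.

Lemma KT2_gt0 (R : realType) n : (2 <= n)%N -> (0 < KT2 R n)%N.
Proof.
move=> /(log2n_ge1 R) L_ge1.
have sq_gt0 : 0 < log2n R n ^+ 2 by rewrite exprn_gt0 // (lt_le_trans ltr01).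
have : 0 < Num.ceil (log2n R n ^+ 2) by rewrite (ceil_gt_int _ 0).
by rewrite /KT2; case: (Num.ceil _) => // m; rewrite absz_nat.
Qed.

Lemma sg_yT2_unselected (R : realType) n (a : {ffun 'I_n -> bool}) g t b j :
  a j = false -> 0 < t -> Num.sg (yT2 a g t b j) = bsign R b.
Proof.
move=> aj t_gt0; rewrite /yT2 aj mul0r mulr0 add0r -mulrA sgrM.
have -> : Num.sg (t ^+ 2 * deltaT2 R n) = 1.
  by rewrite gtr0_sg // mulr_gt0 ?exprn_gt0 // invr_gt0 exprn_gt0.
by case: b; rewrite mulr1 /= ?sgr1 ?sgrN1.
Qed.

Lemma sum_bernoulli_unselected (R : comPzRingType) n (p : R) (i : 'I_n) :
  \sum_(a : {ffun 'I_n -> bool} | ~~ a i) \prod_j (if a j then p else 1 - p)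
  = 1 - p.
Proof.
pose w (j : 'I_n) (c : bool) : R :=
  if c then (if j == i then 0 else p) else 1 - p.
rewrite big_mkcond /=.
transitivity (\sum_(a : {ffun 'I_n -> bool}) \prod_j w j (a j)).
  apply: eq_bigr => a _; case: ifPn => [/negbTE ai | /negbNE ai].
    apply: eq_bigr => j _; rewrite /w; case aj: (a j) => //.
    by case: eqP => // ji; rewrite -ji aj in ai.
  by rewrite (bigD1 i) //= /w ai eqxx mul0r.
rewrite -(bigA_distr_bigA w) (bigD1 i) //= big_bool /w eqxx /= add0r big1 ?mulr1 //.
by move=> j /negbTE ji; rewrite big_bool /= ji subrKC.
Qed.

Lemma sum_uniform_choices (R : numFieldType) K (c : R) :
  (0 < K)%N -> \sum_(k < K) \sum_(b : bool) (c / K%:R / 2) = c.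
Proof.
move=> K_gt0; have K_neq0 : (K%:R : R) != 0 by rewrite pnatr_eq0 -lt0n.
rewrite sumr_const card_ord big_bool /= -[_ *+ K]mulr_natr.
by field; rewrite K_neq0.
Qed.

Theorem mainTheorem8 (R : realType) (n : nat) (hn : (2 <= n)%N) (i : 'I_n) :
  ((1 - betaT2 R n)%:E <= T2_pass_prob (fun x : 'I_n -> R => x i))%E.
Proof.
set K := KT2 R n; set be := betaT2 R n.
pose w (a : {ffun 'I_n -> bool}) := \prod_j (if a j then be else 1 - be).
have w_ge0 a : 0 <= w a.
  apply: prodr_ge0 => j _; case: (a j); first exact: betaT2_ge0.
  by rewrite subr_ge0 betaT2_le1.
apply: (@le_trans _ _ (\sum_(a : {ffun 'I_n -> bool}) \sum_(k < K)
   \sum_(b : bool) (w a * (~~ a i)%:R / K%:R / 2)%:E)%E).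
  under eq_bigr do under eq_bigr do rewrite sumEFin.
  under eq_bigr do rewrite sumEFin.
  rewrite sumEFin lee_fin (eq_bigr (fun a : {ffun _} => if ~~ a i then w a else 0)).
    by rewrite -big_mkcond sum_bernoulli_unselected.
  by move=> a _; rewrite sum_uniform_choices ?KT2_gt0 //; case: (a i); rewrite ?mulr1 ?mulr0.
apply: lee_sum => a _; apply: lee_sum => k _; apply: lee_sum => b _.
case ai: (a i) => /=.
  rewrite mulr0 !mul0r mule_ge0 ?lee_fin ?divr_ge0 ?w_ge0 //.
  by apply: gauss_iter_ge0 => g; rewrite lee_fin ler0n.
have t_gt0 : 0 < (n%:R : R) ^+ k.+1 by rewrite exprn_gt0 // ltr0n (leq_trans _ hn).
set pass := (fun g : nat -> R => _).
have -> : pass = fun _ => 1%E.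
  by apply: funext => g; rewrite /pass sg_yT2_unselected // eqxx.
by rewrite gauss_iter_cst mulr1 mule1.
Qed.
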